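(* Let $V$ be a finite-dimensional scalar product space and $T$ a self-adjoint operator on $V$. Fix an eigenvalue $\lambda$ of $T$ and let $U=(T-\lambda I)|_{K_\lambda}$. If $k\ge 0$ is an integer with $U^k\neq 0$, then there exists $x\in K_\lambda$ such that $\langle U^k x,x\rangle\neq 0$.
   Context: A scalar product is a non-degenerate symmetric bilinear form $\langle\cdot,\cdot\rangle$ over $\mathbb{R}$ or $\mathbb{C}$ (bilinear, not Hermitian, in the complex case). $T$ is self-adjoint if $\langle Tx,y\rangle=\langle x,Ty\rangle$ for all $x,y$. If $V$ is real, eigenvalues (possibly non-real) and generalized eigenspaces are taken in the complexification $V^{\mathbb{C}}$ with the complex-bilinear extension of the scalar product and of $T$. The generalized eigenspace is $K_\lambda=\{x:(T-\lambda I)^m x=0\text{ for some positive integer }m\}$. *)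

From HB Require Import structures.
From mathcomp Require Import all_boot all_order all_algebra.
From mathcomp Require Import complex.
Set Implicit Arguments. Unset Strict Implicit. Unset Printing Implicit Defensive.
Import GRing.Theory.
Local Open Scope ring_scope.

(* A finite-dimensional space V over F is modelled as column vectors 'cV[F]_n;
   a scalar product <x,y> = x^T B y is given by its Gram matrix B. *)
Definition sform (F : fieldType) (n : nat) (B : 'M[F]_n) (x y : 'cV[F]_n) : F :=
  (x^T *m B *m y) 0 0.

Definition scalar_product (F : fieldType) (n : nat) (B : 'M[F]_n) : Prop :=
  B^T = B /\ B \in unitmx.

Definition self_adjoint (F : fieldType) (n : nat) (B T : 'M[F]_n) : Prop :=
  forall x y : 'cV[F]_n, sform B (T *m x) y = sform B x (T *m y).

Definition is_eigenvalue (F : fieldType) (n : nat) (T : 'M[F]_n) (l : F) : Prop :=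
  exists2 x : 'cV[F]_n, x != 0 & T *m x = l *: x.

Definition shiftpow (F : fieldType) (n : nat) (T : 'M[F]_n) (l : F) (m : nat)
  (x : 'cV[F]_n) : 'cV[F]_n := iter m (fun v => (T - l%:M) *m v) x.

Definition in_gen_eigenspace (F : fieldType) (n : nat) (T : 'M[F]_n) (l : F)
  (x : 'cV[F]_n) : Prop := exists m : nat, (0 < m)%N /\ shiftpow T l m x = 0.

(* Core statement over a field F (used with F = C = R[i]):
   U = (T - l I)|_{K_l};  U^k <> 0  ->  exists x in K_l, <U^k x, x> <> 0. *)
Definition thm_statement (F : fieldType) (n : nat) (B T : 'M[F]_n) : Prop :=
  scalar_product B -> self_adjoint B T ->
  forall (l : F), is_eigenvalue T l ->
  forall k : nat,
    (exists2 y, in_gen_eigenspace T l y & shiftpow T l k y != 0) ->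
    exists2 x, in_gen_eigenspace T l x & sform B (shiftpow T l k x) x != 0.

Definition complexify (R : rcfType) (m n : nat) (A : 'M[R]_(m, n)) : 'M[R[i]]_(m, n) :=
  map_mx (fun r : R => (r%:C)%C) A.

(* Let [y] lie in [K_l] with [w = U^k y != 0].  Non-degeneracy gives [v] with
   [<w, v> != 0].  The projection [P] onto [K_l] along the other generalized
   eigenspaces is a polynomial in [T], hence self-adjoint, and it fixes [w]; so
   [z = P v] lies in [K_l] and [<U^k y, z> = <w, v> != 0].  Since
   [(x, x') |-> <U^k x, x'>] is symmetric, polarization shows that one of
   [y], [z], [y + z] is the required vector. *)

From HB Require Import structures.
From mathcomp Require Import all_boot all_order all_algebra.
From mathcomp Require Import complex.
From mathcomp Require Import ring.

Set Implicit Arguments.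
Unset Strict Implicit.
Unset Printing Implicit Defensive.

Import GRing.Theory Num.Theory.
Local Open Scope ring_scope.

Lemma shiftpowE (F : fieldType) n (T : 'M[F]_n) l m x :
  shiftpow T l m x = (T - l%:M) ^+ m *m x.
Proof.
elim: m => [|m IH]; first by rewrite expr0 mul1mx.
by rewrite /shiftpow iterS -/(shiftpow T l m x) IH exprS mulmxA.
Qed.

Lemma exp_shift_horner (F : fieldType) n (T : 'M[F]_n.+1) l m :
  (T - l%:M) ^+ m = horner_mx T (('X - l%:P) ^+ m).
Proof. by rewrite rmorphXn rmorphB /= horner_mx_X horner_mx_C. Qed.

Lemma expmxD_mul_eq0 (F : fieldType) n (N : 'M[F]_n.+1) m r (x : 'cV[F]_n.+1) :
  N ^+ m *m x = 0 -> N ^+ (r + m) *m x = 0.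
Proof. by move=> Nx; rewrite exprD -mulmxE -mulmxA Nx mulmx0. Qed.

Lemma in_gen_eigenspaceD (F : fieldType) n (T : 'M[F]_n.+1) l x y :
  in_gen_eigenspace T l x -> in_gen_eigenspace T l y ->
  in_gen_eigenspace T l (x + y).
Proof.
rewrite /in_gen_eigenspace; move=> [m [m_gt0 Nx]] [r [_ Ny]].
exists (r + m)%N; split; first by rewrite addn_gt0 m_gt0 orbT.
rewrite !shiftpowE in Nx Ny *; rewrite mulmxDr expmxD_mul_eq0 // addnC expmxD_mul_eq0 //.
by rewrite addr0.
Qed.

Section ScalarProduct.

Variables (F : fieldType) (n : nat) (B : 'M[F]_n).

Lemma sformDl x1 x2 y : sform B (x1 + x2) y = sform B x1 y + sform B x2 y.
Proof. by rewrite /sform linearD /= !mulmxDl mxE. Qed.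

Lemma sformDr x y1 y2 : sform B x (y1 + y2) = sform B x y1 + sform B x y2.
Proof. by rewrite /sform !mulmxDr mxE. Qed.

Lemma sformC x y : B^T = B -> sform B x y = sform B y x.
Proof.
move=> sym_B; rewrite /sform -[in LHS](trmxK (x^T *m B *m y)) mxE.
by rewrite !trmx_mul sym_B trmxK mulmxA.
Qed.

Lemma sform_nondegenerate w : B \in unitmx -> w != 0 ->
  exists v, sform B w v != 0.
Proof.
move=> unit_B w_neq0.
have [j wj_neq0] : exists j, w j 0 != 0.
  apply/existsP; apply: contraNT w_neq0 => /existsPn w0.
  by apply/eqP/matrixP => i j; rewrite ord1 mxE; apply/eqP/negbNE/w0.
exists (invmx B *m delta_mx j 0).
by rewrite /sform mulmxA -(mulmxA w^T) mulmxV // mulmx1 -colE !mxE.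
Qed.

Lemma self_adjointE T : self_adjoint B T <-> T^T *m B = B *m T.
Proof.
split=> [adj_T | comm_T x y]; last first.
  by rewrite /sform trmx_mul !mulmxA -(mulmxA x^T T^T) comm_T !mulmxA.
apply/matrixP => i j.
have entry (M : 'M[F]_n) :
    ((delta_mx i 0 : 'cV[F]_n)^T *m M *m (delta_mx j 0 : 'cV[F]_n)) 0 0 = M i j.
  by rewrite trmx_delta -rowE -colE !mxE.
rewrite -entry -(entry (B *m T)) !mulmxA.
by have := adj_T (delta_mx i 0) (delta_mx j 0); rewrite /sform trmx_mul !mulmxA.
Qed.

End ScalarProduct.

Lemma self_adjoint_horner (F : fieldType) n (B T : 'M[F]_n.+1) p :
  self_adjoint B T -> self_adjoint B (horner_mx T p).
Proof.
move=> /self_adjointE adj_T; apply/self_adjointE.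
elim/poly_ind: p => [|p c IH]; first by rewrite rmorph0 trmx0 mul0mx mulmx0.
rewrite rmorphD rmorphM /= horner_mx_X horner_mx_C -mulmxE.
rewrite linearD /= trmx_mul tr_scalar_mx mulmxDl mulmxDr scalar_mxC.
have comm_Tp : comm_mx T (horner_mx T p) by apply: comm_mx_horner.
by rewrite -mulmxA IH mulmxA adj_T -mulmxA comm_Tp mulmxA.
Qed.

(* If [<M y, y>] and [<M z, z>] vanish, then [<M (y + z), y + z> = 2 <M y, z>]. *)
Lemma sform_polarization (F : fieldType) n (B M : 'M[F]_n) y z :
  (2%:R : F) != 0 -> B^T = B -> self_adjoint B M -> sform B (M *m y) z != 0 ->
  [|| sform B (M *m y) y != 0, sform B (M *m z) z != 0
    | sform B (M *m (y + z)) (y + z) != 0].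
Proof.
move=> two_neq0 sym_B adj_M Myz_neq0.
have [Myy|] := eqVneq (sform B (M *m y) y) 0; last by [].
have [Mzz|] := eqVneq (sform B (M *m z) z) 0; last by rewrite orbT.
rewrite mulmxDr !sformDl !sformDr Myy Mzz add0r addr0.
by rewrite (adj_M z) (sformC z) // -mulr2n -mulr_natr mulf_neq0.
Qed.

(* A polynomial in [T] acting as the projection onto the generalized eigenspace
   along the other ones: write [char_poly T = q * ('X - l)^a] with [q l != 0]
   and use a Bezout identity [u q + v ('X - l)^m = 1]. *)
Lemma gen_eigenspace_projector (F : fieldType) n (T : 'M[F]_n.+1) l m :
  exists p : {poly F},
    (forall x : 'cV_n.+1, (T - l%:M) ^+ m *m x = 0 -> horner_mx T p *m x = x) /\
    (forall x : 'cV_n.+1, in_gen_eigenspace T l (horner_mx T p *m x)).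
Proof.
have [a [q q_l char_T]] := multiplicity_XsubC (char_poly T) l.
have {}q_l : ~~ root q l by move: q_l; rewrite monic_neq0 // char_poly_monic.
have : coprimep q (('X - l%:P) ^+ m).
  by apply: coprimep_expr; rewrite coprimep_XsubC.
case/Bezout_eq1_coprimepP => -[u v] /= bezout.
exists (u * q); split=> [x Nx | x].
  rewrite (_ : u * q = 1 - v * ('X - l%:P) ^+ m); last by rewrite -bezout addrK.
  rewrite rmorphB rmorphM rmorph1 /= -exp_shift_horner mulmxBl mul1mx.
  by rewrite -mulmxA Nx mulmx0 subr0.
exists a.+1; split=> //; rewrite shiftpowE exp_shift_horner mulmxA mulmxE -rmorphM.
have -> : ('X - l%:P) ^+ a.+1 * (u * q) = ('X - l%:P) * u * char_poly T.
  by rewrite char_T exprSr; ring.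
by rewrite rmorphM /= Cayley_Hamilton mulr0 mul0mx.
Qed.

Theorem sform_gen_eigenspace_neq0 (F : fieldType) n (B T : 'M[F]_n.+1) :
  (2%:R : F) != 0 -> thm_statement B T.
Proof.
move=> two_neq0 [sym_B unit_B] adj_T l _ k [y y_K].
have [m [_ Ny]] := y_K.
rewrite !shiftpowE in Ny * => w_neq0.
have adj_U : self_adjoint B ((T - l%:M) ^+ k).
  by rewrite exp_shift_horner; apply: self_adjoint_horner.
have [v wv_neq0] := sform_nondegenerate unit_B w_neq0.
have [p [Kp_id Kp_im]] := gen_eigenspace_projector T l m.
have Pw : horner_mx T p *m ((T - l%:M) ^+ k *m y) = (T - l%:M) ^+ k *m y.
  by apply: Kp_id; rewrite mulmxA mulmxE -exprD addnC expmxD_mul_eq0.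
have wz_neq0 : sform B ((T - l%:M) ^+ k *m y) (horner_mx T p *m v) != 0.
  by rewrite -self_adjoint_horner // Pw.
have z_K := Kp_im v.
case/or3P: (sform_polarization two_neq0 sym_B adj_U wz_neq0) => Q_neq0.
- by exists y; rewrite ?shiftpowE.
- by exists (horner_mx T p *m v); rewrite ?shiftpowE.
- by exists (y + horner_mx T p *m v); [apply: in_gen_eigenspaceD | rewrite shiftpowE].
Qed.

Theorem mainTheorem4 (R : rcfType) (n : nat) :
  (forall B T : 'M[R[i]]_n, thm_statement B T) /\
  (forall B T : 'M[R]_n, scalar_product B -> self_adjoint B T ->
     thm_statement (complexify B) (complexify T)).
Proof.
have complex_case (B T : 'M[R[i]]_n) : thm_statement B T.
  case: n B T => [|n] B T; last by apply: sform_gen_eigenspace_neq0; rewrite pnatr_eq0.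
  move=> _ _ l _ k [y _]; have -> : shiftpow T l k y = 0 by apply/matrixP => -[].
  by rewrite eqxx.
by split=> // B T _ _; apply: complex_case.
Qed.
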